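(* Let $m\ge 2$, $n\ge1$ be integers, let $\mathcal P=(p_{i_1 i_2\dots i_m})\in\mathbb R^{[m,n]}$ be a transition probability tensor with first-index flattening $R\in\mathbb R^{n\times n^{m-1}}$, let $v\in\mathbb R^n$ be a stochastic vector, and let $\alpha\in[0,1)$ satisfy $\alpha<\frac{1}{m-1}$. Define $f(\mathbf{x})=\alpha R(\mathbf{x}\otimes\cdots\otimes\mathbf{x})+(1-\alpha)v-\mathbf{x}$ (with $m-1$ Kronecker factors $\mathbf{x}$) and $$J_f(\mathbf{x})=\alpha R\Big(I\otimes\mathbf{x}\otimes\cdots\otimes\mathbf{x}+\mathbf{x}\otimes I\otimes\mathbf{x}\otimes\cdots\otimes\mathbf{x}+\cdots+\mathbf{x}\otimes\cdots\otimes\mathbf{x}\otimes I\Big)-I.$$ Then the Newton iteration $\mathbf{x}_{k+1}=\mathbf{x}_k-J_f(\mathbf{x}_k)^{-1}f(\mathbf{x}_k)$, $k=0,1,2,\dots$, started from $\mathbf{x}_0=0$, converges quadratically to the unique solution $\mathbf{x}$ of the multilinear PageRank equation $\mathbf{x}=\alpha R(\mathbf{x}\otimes\cdots\otimes\mathbf{x})+(1-\alpha)v$.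
   Context: A transition probability tensor $\mathcal P\in\mathbb R^{[m,n]}$ (order $m$, each dimension $n$) satisfies $p_{i_1\dots i_m}\ge0$ and $\sum_{i_1=1}^n p_{i_1 i_2\dots i_m}=1$ for all $(i_2,\dots,i_m)$. A vector is stochastic if its entries are non-negative and sum to one. The flattening $R$ along the first index is the $n\times n^{m-1}$ matrix with $\big(R(y^{(2)}\otimes\cdots\otimes y^{(m)})\big)_i=\sum_{i_2,\dots,i_m=1}^n p_{i i_2\dots i_m}y^{(2)}_{i_2}\cdots y^{(m)}_{i_m}$ for all $y^{(j)}\in\mathbb R^n$. $I$ is the $n\times n$ identity, $\otimes$ the Kronecker product; in the Jacobian, each of the $m-1$ summands is a Kronecker product of $m-1$ factors with $I$ in exactly one position and $\mathbf{x}$ (as an $n\times1$ matrix) in the other $m-2$ positions. Quadratic convergence means there is a constant $C>0$ with $\|\mathbf{x}_{k+1}-\mathbf{x}\|\le C\|\mathbf{x}_k-\mathbf{x}\|^2$ for all sufficiently large $k$. *)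

From mathcomp Require Import all_boot all_order all_algebra.
From mathcomp Require Import reals.
Set Implicit Arguments. Unset Strict Implicit. Unset Printing Implicit Defensive.
Import Order.TTheory GRing.Theory Num.Theory.
Local Open Scope ring_scope.

(* An order-m tensor of dimension n is represented as
   P i t = p_{i i_2 ... i_m}, where t : {ffun 'I_k -> 'I_n} lists the
   trailing k = m-1 indices (t j = i_{j+2}). *)
Definition tensor (R : Type) (n k : nat) := 'I_n -> {ffun 'I_k -> 'I_n} -> R.

Section Defs.
Variables (R : realType) (n k : nat).

Definition transition_tensor (P : tensor R n k) : Prop :=
  (forall i t, 0 <= P i t) /\ (forall t, \sum_(i < n) P i t = 1).

Definition stochastic (v : 'cV[R]_n) : Prop :=
  (forall i, 0 <= v i 0) /\ \sum_(i < n) v i 0 = 1.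

(* R (y^(2) ⊗ ... ⊗ y^(m)), with R the first-index flattening of P *)
Definition flat_apply (P : tensor R n k) (ys : 'I_k -> 'cV[R]_n) : 'cV[R]_n :=
  \col_i \sum_(t : {ffun 'I_k -> 'I_n}) P i t * \prod_(j < k) ys j (t j) 0.

(* R (x ⊗ ... ⊗ x ⊗ I ⊗ x ⊗ ... ⊗ x), I in position j : an n x n matrix
   whose l-th column is R (x ⊗ .. ⊗ e_l ⊗ .. ⊗ x). *)
Definition flat_apply_I (P : tensor R n k) (j : 'I_k) (x : 'cV[R]_n) : 'M[R]_n :=
  \matrix_(i, l) flat_apply P (fun j' => if j' == j then delta_mx l 0 else x) i 0.

Definition mlpr_f (P : tensor R n k) (alpha : R) (v x : 'cV[R]_n) : 'cV[R]_n :=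
  alpha *: flat_apply P (fun _ => x) + (1 - alpha) *: v - x.

Definition mlpr_J (P : tensor R n k) (alpha : R) (x : 'cV[R]_n) : 'M[R]_n :=
  alpha *: (\sum_(j < k) flat_apply_I P j x) - 1%:M.

Fixpoint newton (P : tensor R n k) (alpha : R) (v : 'cV[R]_n) (i : nat)
  : 'cV[R]_n :=
  match i with
  | 0 => 0
  | i'.+1 => let y := newton P alpha v i' in
             y - invmx (mlpr_J P alpha y) *m mlpr_f P alpha v y
  end.

Definition vnorm1 (x : 'cV[R]_n) : R := \sum_(i < n) `|x i 0|.

End Defs.

(* Write k = m - 1 and e_i = 1 - sum_j (x_i)_j.  Since P is column stochastic,
   summing the Newton equation over the coordinates turns it into the scalar
   Newton iteration for alpha s^k + 1 - alpha - s, whose root is s = 1; hence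
   e_(i+1) <= alpha k e_i and (1 - alpha k) e_(i+1) <= k^2 e_i^2.
   The Jacobian is -(I - alpha M(x)) with M(x) >= 0 of column sums
   k (sum x)^(k-1) <= k, so for x >= 0 with sum x <= 1 it is invertible and
   I - alpha M(x) is inverse-positive.  With the convexity of x |-> R x^k on
   the nonnegative orthant this shows inductively that the iterates are
   nonnegative, increase, and stay below every nonnegative solution.  Their
   supremum x is then a solution with coordinate sum 1, the only stochastic
   one, and ||x_i - x||_1 = e_i. *)

From mathcomp Require Import all_boot all_order all_algebra.
From mathcomp Require Import classical_sets reals.
From mathcomp Require Import ring lra.
Set Implicit Arguments. Unset Strict Implicit. Unset Printing Implicit Defensive.
Import Order.TTheory GRing.Theory Num.Theory.
Local Open Scope ring_scope.

Section ScalarInequalities.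
Variable R : realFieldType.

Lemma sum_prod_slot_le_prodrB (k : nat) (a b : 'I_k -> R) :
  (forall j, 0 <= b j <= a j) ->
  \sum_(j < k) \prod_(j' < k) (if j' == j then a j' - b j' else b j')
    <= \prod_(j < k) a j - \prod_(j < k) b j.
Proof.
elim: k a b => [|k IH] a b hab; first by rewrite !big_ord0 subrr.
rewrite big_ord_recl !big_ord_recl /=.
under [\sum_(i < k) _]eq_bigr => j _ do rewrite big_ord_recl (negbTE (neq_lift _ _)).
under [\sum_(i < k) _]eq_bigr => j _ do under eq_bigr => j' _ do rewrite (inj_eq lift_inj).
rewrite -mulr_sumr.
have := IH (a \o lift ord0) (b \o lift ord0) (fun j => hab _).
set S := \sum_(j < k) _; set A := \prod_(j < k) _; set B := \prod_(j < k) _.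
have B0 : 0 <= B by apply: prodr_ge0 => j _; case/andP: (hab (lift ord0 j)).
have BA : B <= A by apply: ler_prod => j _; exact: hab.
case/andP: (hab ord0) => b0 ba0 hS.
nra.
Qed.

Lemma subr1X_le (s : R) (k : nat) : 0 <= s <= 1 -> 1 - s ^+ k <= k%:R * (1 - s).
Proof.
case/andP=> s0 s1; rewrite -opprB subrX1 -mulNr opprB mulrC ler_wpM2r ?subr_ge0 //.
rewrite -[k in k%:R]card_ord -sumr_const.
by apply: ler_sum => i _; exact: exprn_ile1.
Qed.

Lemma newton_remainder_bounds (s : R) (K : nat) : 0 <= s <= 1 ->
  0 <= 1 - K.+1%:R * s ^+ K + K%:R * s ^+ K.+1 <= K.+1%:R ^+ 2 * (1 - s) ^+ 2.
Proof.
case/andP=> s0 s1; elim: K => [|K /andP[q0 q1]].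
  by rewrite expr0 mulr1 mul0r addr0 subrr lexx /= mulr_ge0 // sqr_ge0.
have natS (j : nat) : j.+1%:R = j%:R + 1 :> R by rewrite -addn1 natrD.
have -> : 1 - K.+2%:R * s ^+ K.+1 + K.+1%:R * s ^+ K.+2 =
    (1 - K.+1%:R * s ^+ K + K%:R * s ^+ K.+1) + K.+1%:R * s ^+ K * (1 - s) ^+ 2.
  by rewrite !natS !exprS; ring.
have p0 : 0 <= s ^+ K by apply: exprn_ge0.
have p1 : s ^+ K <= 1 by apply: exprn_ile1.
have r0 : 0 <= (1 - s) ^+ 2 by apply: sqr_ge0.
have K0 : 0 <= K%:R :> R by apply: ler0n.
rewrite natS in q1 *; rewrite natS; apply/andP; split; first by nra.
nra.
Qed.

Lemma scalar_newton_step (k : nat) (alpha s s' : R) :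
  (0 < k)%N -> 0 <= alpha -> alpha * k%:R < 1 -> 0 <= s <= 1 ->
  (s' - s) - alpha * (k%:R * s ^+ k.-1 * (s' - s)) = alpha * s ^+ k + (1 - alpha) - s ->
  [/\ 0 <= 1 - s', 1 - s' <= alpha * k%:R * (1 - s) &
      (1 - alpha * k%:R) * (1 - s') <= k%:R ^+ 2 * (1 - s) ^+ 2].
Proof.
case: k => // K _ a0 ak s01 Hs; rewrite /= in Hs.
have /andP[s0 s1] := s01.
have p0 : 0 <= s ^+ K by apply: exprn_ge0.
have p1 : s ^+ K <= 1 by apply: exprn_ile1.
have K1 : 1 <= K.+1%:R :> R by rewrite ler1n.
set c := alpha * K.+1%:R * s ^+ K.
have c0 : 0 <= c by rewrite /c !mulr_ge0.
have c1 : c <= alpha * K.+1%:R by rewrite /c ler_piMr // mulr_ge0.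
have /andP[q0 q1] := newton_remainder_bounds K s01.
(* the bracket is the error at t = 1 of the tangent to t^(K+1) at t = s *)
have E : (1 - c) * (1 - s') = alpha * (1 - K.+1%:R * s ^+ K + K%:R * s ^+ K.+1).
  by move: Hs; rewrite /c exprS -[K.+1]addn1 natrD => Hs; nra.
have c_lt1 : 0 < 1 - c by lra.
have e0 : 0 <= 1 - s'.
  by rewrite -(pmulr_rge0 _ c_lt1) E mulr_ge0.
have hB := subr1X_le K.+1 s01.
split => //.
- rewrite -(ler_pM2l c_lt1).
  have E' : (1 - c) * (1 - s') = alpha * (1 - s ^+ K.+1) - c * (1 - s).
    by move: Hs; rewrite /c => Hs; nra.
  have : 0 <= c * (1 - alpha * K.+1%:R) * (1 - s) by rewrite !mulr_ge0 // ?subr_ge0 // ltW.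
  rewrite E'; have := ler_wpM2l a0 hB; nra.
- apply: le_trans (_ : (1 - c) * (1 - s') <= _); first by rewrite ler_wpM2r //; lra.
  by rewrite E; nra.
Qed.

End ScalarInequalities.

Lemma contraction_seq_small (R : archiFieldType) (e : nat -> R) (rho : R) :
  rho < 1 -> (forall i, 0 <= e i) -> (forall i, e i.+1 <= rho * e i) ->
  forall eps : R, 0 < eps -> exists N, forall i, (N <= i)%N -> e i < eps.
Proof.
move=> r1 e0 eS eps eps0.
have decay i : (1 + i%:R * (1 - rho)) * e i <= e 0%N.
  elim: i => [|i IH]; first by rewrite mul0r addr0 mul1r.
  have ei := e0 i; have eSi := eS i.
  have le_ei : e i.+1 <= e i by nra.
  have : 0 <= i%:R * (1 - rho) * (e i - e i.+1) by rewrite !mulr_ge0 ?ler0n // subr_ge0 // ltW.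
  have : (2 - rho) * e i.+1 <= e i.
    have r2 : 0 <= 2 - rho by lra.
    have := ler_wpM2l r2 eSi; have := e0 i.+1; nra.
  rewrite -addn1 natrD; nra.
have r0 : 0 < (1 - rho) * eps by rewrite mulr_gt0 // subr_gt0.
have B0 : 0 <= e 0%N / ((1 - rho) * eps) by rewrite divr_ge0 ?e0 // ltW.
exists (Num.bound (e 0%N / ((1 - rho) * eps))) => i Ni.
have := archi_boundP B0; rewrite ltr_pdivrMr // => hB.
have hi : (Num.bound (e 0%N / ((1 - rho) * eps)))%:R <= i%:R :> R by rewrite ler_nat.
rewrite ltNge; apply/negP => epsi.
have := decay i; have := e0 i.
have : i%:R * ((1 - rho) * eps) <= i%:R * (1 - rho) * e i.
  by rewrite -mulrA ler_wpM2l ?ler0n // ler_wpM2l // subr_ge0 ltW.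
nra.
Qed.

Section ColumnVectors.
Variables (R : realFieldType) (n : nat).
Implicit Types (x w u : 'cV[R]_n).

Definition vsum x : R := \sum_(i < n) x i 0.

Definition nonneg x := forall i, 0 <= x i 0.

Lemma nonneg0 : nonneg 0.
Proof. by move=> i; rewrite mxE. Qed.

Lemma vsum0 : vsum 0 = 0.
Proof. by rewrite /vsum big1 // => i _; rewrite mxE. Qed.

Lemma vsumD x w : vsum (x + w) = vsum x + vsum w.
Proof. by rewrite /vsum -big_split; apply: eq_bigr => i _; rewrite mxE. Qed.

Lemma vsumN x : vsum (- x) = - vsum x.
Proof. by rewrite /vsum -sumrN; apply: eq_bigr => i _; rewrite mxE. Qed.

Lemma vsumB x w : vsum (x - w) = vsum x - vsum w.
Proof. by rewrite vsumD vsumN. Qed.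

Lemma vsumZ (c : R) x : vsum (c *: x) = c * vsum x.
Proof. by rewrite /vsum mulr_sumr; apply: eq_bigr => i _; rewrite mxE. Qed.

Lemma vsum_sum (I : finType) (F : I -> 'cV[R]_n) :
  vsum (\sum_(j : I) F j) = \sum_(j : I) vsum (F j).
Proof. by rewrite /vsum; under eq_bigr do rewrite summxE; rewrite exchange_big. Qed.

Lemma vsum_ge0 x : nonneg x -> 0 <= vsum x.
Proof. by move=> x0; apply: sumr_ge0. Qed.

Lemma entry_le_vsum x i : nonneg x -> x i 0 <= vsum x.
Proof. by move=> x0; rewrite /vsum (bigD1 i) //= lerDl sumr_ge0. Qed.

Lemma nonneg_vsum_eq0 x : nonneg x -> vsum x = 0 -> x = 0.
Proof.
move=> x0 sx; apply/matrixP => i j; rewrite (ord1 j) mxE.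
exact: (psumr_eq0P (fun i _ => x0 i) sx).
Qed.

Lemma nonneg_subr_vsum_eq x w : nonneg (w - x) -> vsum x = vsum w -> x = w.
Proof.
move=> xw sxw; apply/eqP; rewrite eq_sym -subr_eq0; apply/eqP.
by apply: nonneg_vsum_eq0 => //; rewrite vsumB sxw subrr.
Qed.

Section ColumnContraction.
Variables (A : 'M[R]_n) (rho : R).
Hypotheses (rho_lt1 : rho < 1) (A_ge0 : forall u, nonneg u -> nonneg (A *m u))
  (A_vsum : forall u, nonneg u -> vsum (A *m u) <= rho * vsum u).

(* The negative part u of w satisfies u <= A u entrywise, which the column
   sums of A only allow for u = 0. *)
Lemma nonneg_of_subr_mul w : nonneg (w - A *m w) -> nonneg w.
Proof.
move=> hw; pose u : 'cV[R]_n := \col_i Num.max 0 (- w i 0).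
have uE i : u i 0 = if 0 <= w i 0 then 0 else - w i 0.
  rewrite mxE; case: leP => wi; first by rewrite max_l // oppr_le0.
  by rewrite max_r // oppr_ge0 ltW.
have u0 : nonneg u by move=> i; rewrite mxE le_max lexx.
clearbody u.
have wu0 : nonneg (w + u).
  by move=> i; rewrite mxE uE; case: (leP 0 (w i 0)) => wi; rewrite ?addr0 ?subrr.
have u_le i : u i 0 <= (A *m u) i 0.
  have := hw i; have := A_ge0 wu0 i; have := A_ge0 u0 i.
  rewrite mulmxDr !mxE uE; case: (leP 0 (w i 0)) => wi; lra.
have su0 : vsum u = 0.
  have su_ge0 : 0 <= vsum u :> R by exact: vsum_ge0.
  have : vsum u <= rho * vsum u.
    by apply: le_trans (A_vsum u0); apply: ler_sum => i _; exact: u_le.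
  move=> su_le; apply/le_anti; rewrite su_ge0 andbT.
  by rewrite -(pmulr_rle0 _ (_ : 0 < 1 - rho)) ?subr_gt0 // mulrBl mul1r subr_le0.
move=> i; have := congr1 (fun x : 'cV[R]_n => x i 0) (nonneg_vsum_eq0 u0 su0).
by rewrite uE mxE; case: (leP 0 (w i 0)) => // wi /eqP; rewrite oppr_eq0 => /eqP wi0; lra.
Qed.

Lemma unitmx_1_sub : 1%:M - A \in unitmx.
Proof.
rewrite -unitmx_tr -row_free_unit; apply/inj_row_free => x hx.
have kerx : x^T - A *m x^T = 0.
  by have := congr1 trmx hx; rewrite trmx_mul trmxK trmx0 mulmxBl mul1mx.
have x0 : nonneg x^T by apply: nonneg_of_subr_mul; rewrite kerx; exact: nonneg0.
have Nx0 : nonneg (- x^T).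
  apply: nonneg_of_subr_mul; rewrite mulmxN opprK addrC -opprB kerx oppr0.
  exact: nonneg0.
apply: trmx_inj; apply/matrixP => i j; rewrite (ord1 j).
have := x0 i; have := Nx0 i; rewrite !mxE oppr_ge0 => x_le0 x_ge0.
by apply/le_anti; rewrite x_le0 x_ge0.
Qed.

End ColumnContraction.

End ColumnVectors.

Section FlatteningCalculus.
Variables (R : realType) (n k : nat) (P : tensor R n k).
Hypothesis HP : transition_tensor P.

Local Notation tpow x := (flat_apply P (fun _ => x)).
Implicit Types (x y w : 'cV[R]_n) (ys zs : 'I_k -> 'cV[R]_n).

Definition slot (j : 'I_k) (w x : 'cV[R]_n) : 'I_k -> 'cV[R]_n :=
  fun j' => if j' == j then w else x.

Definition flat_deriv (x : 'cV[R]_n) : 'M[R]_n := \sum_(j < k) flat_apply_I P j x.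

Lemma vsum_flat_apply ys : vsum (flat_apply P ys) = \prod_(j < k) vsum (ys j).
Proof.
rewrite /vsum; under eq_bigr do rewrite mxE.
rewrite exchange_big /=; under eq_bigr do rewrite -mulr_suml HP.2 mul1r.
by rewrite bigA_distr_bigA.
Qed.

Lemma vsum_tpow x : vsum (tpow x) = vsum x ^+ k.
Proof. by rewrite vsum_flat_apply prodr_const card_ord. Qed.

Lemma flat_apply_ge0 ys : (forall j, nonneg (ys j)) -> nonneg (flat_apply P ys).
Proof.
move=> ys0 i; rewrite mxE; apply: sumr_ge0 => t _.
by apply: mulr_ge0; [exact: HP.1 | apply: prodr_ge0 => j _; exact: ys0].
Qed.

Lemma flat_apply_le ys zs : (forall j l, 0 <= ys j l 0 <= zs j l 0) ->
  forall i, flat_apply P ys i 0 <= flat_apply P zs i 0.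
Proof.
move=> yz i; rewrite !mxE; apply: ler_sum => t _.
by apply: ler_wpM2l; [exact: HP.1 | apply: ler_prod => j _; exact: yz].
Qed.

Lemma flat_apply_I_mul j x w : flat_apply_I P j x *m w = flat_apply P (slot j w x).
Proof.
apply/matrixP => i c; rewrite !mxE (ord1 c).
under eq_bigr do rewrite !mxE mulr_suml.
rewrite exchange_big /=; apply: eq_bigr => t _.
under eq_bigr do rewrite -mulrA.
rewrite -mulr_sumr; congr (_ * _).
have delta_prod (l : 'I_n) : \prod_(j' < k) (if j' == j then delta_mx l 0 : 'cV[R]_n else x) (t j') 0
    = (t j == l)%:R * \prod_(j' < k | j' != j) x (t j') 0.
  rewrite (bigD1 j) //= eqxx mxE eqxx andbT; congr (_ * _).
  by apply: eq_bigr => j' /negbTE ->.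
rewrite (eq_bigr (fun l => (t j == l)%:R * (\prod_(j' < k | j' != j) x (t j') 0 * w l 0)));
  last by move=> l _; rewrite mulrA; congr (_ * _); exact: delta_prod.
rewrite (bigD1 (t j)) //= eqxx mul1r [X in _ + X]big1 ?addr0; last first.
  by move=> l ne_l; rewrite eq_sym (negbTE ne_l) mul0r.
rewrite [RHS](bigD1 j) //= /slot eqxx mulrC; congr (_ * _).
by apply: eq_bigr => j' /negbTE ->.
Qed.

Lemma flat_deriv_mul x w : flat_deriv x *m w = \sum_(j < k) flat_apply P (slot j w x).
Proof. by rewrite mulmx_suml; apply: eq_bigr => j _; rewrite flat_apply_I_mul. Qed.

Lemma flat_deriv_ge0 x w : nonneg x -> nonneg w -> nonneg (flat_deriv x *m w).
Proof.
move=> x0 w0 i; rewrite flat_deriv_mul summxE; apply: sumr_ge0 => j _.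
by apply: flat_apply_ge0 => j'; rewrite /slot; case: (j' == j).
Qed.

Lemma vsum_flat_deriv x w : vsum (flat_deriv x *m w) = k%:R * vsum x ^+ k.-1 * vsum w.
Proof.
rewrite flat_deriv_mul vsum_sum.
under eq_bigr => j _.
  rewrite vsum_flat_apply (bigD1 j) //= /slot eqxx.
  under eq_bigr => j' /negbTE -> do [].
  rewrite prodr_const cardC1 card_ord.
  over.
by rewrite sumr_const card_ord -mulr_natl; ring.
Qed.

Lemma tpow_convex x y : nonneg y -> nonneg (x - y) ->
  nonneg (tpow x - tpow y - flat_deriv y *m (x - y)).
Proof.
move=> y0 xy i; rewrite flat_deriv_mul !mxE summxE.
under [X in _ - X]eq_bigr => j _ do rewrite mxE.
rewrite exchange_big /= -!sumrB; apply: sumr_ge0 => t _.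
rewrite -mulr_sumr -!mulrBr mulr_ge0 ?HP.1 // subr_ge0.
have yx j : 0 <= y (t j) 0 <= x (t j) 0.
  by have := xy (t j); rewrite !mxE subr_ge0 => ->; rewrite y0.
apply: le_trans (sum_prod_slot_le_prodrB yx); rewrite le_eqVlt; apply/orP; left.
apply/eqP; apply: eq_bigr => j _; apply: eq_bigr => j' _.
by rewrite /slot; case: (j' == j); rewrite ?mxE.
Qed.

Section ScaledDerivative.
Variables (alpha : R) (x : 'cV[R]_n).
Hypotheses (alpha_ge0 : 0 <= alpha) (x_ge0 : nonneg x) (vsum_x_le1 : vsum x <= 1).

Lemma scaled_deriv_ge0 u : nonneg u -> nonneg ((alpha *: flat_deriv x) *m u).
Proof.
move=> u0 i; rewrite -scalemxAl mxE mulr_ge0 //; exact: flat_deriv_ge0.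
Qed.

Lemma vsum_scaled_deriv_le u : nonneg u ->
  vsum ((alpha *: flat_deriv x) *m u) <= alpha * k%:R * vsum u.
Proof.
move=> u0; rewrite -scalemxAl vsumZ vsum_flat_deriv mulrA ler_wpM2r ?vsum_ge0 //.
by rewrite ler_wpM2l // ler_piMr ?ler0n // exprn_ile1 // vsum_ge0.
Qed.

Lemma unitmx_mlpr_J : alpha * k%:R < 1 -> mlpr_J P alpha x \in unitmx.
Proof.
move=> ak; rewrite /mlpr_J -/(flat_deriv x) -opprB -scaleN1r unitmxZ ?unitrN1 //.
by apply: unitmx_1_sub ak _ _; [exact: scaled_deriv_ge0 | exact: vsum_scaled_deriv_le].
Qed.

End ScaledDerivative.

End FlatteningCalculus.

Section NewtonIteration.
Variables (R : realType) (n k : nat) (P : tensor R n k) (v : 'cV[R]_n) (alpha : R).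
Hypotheses (HP : transition_tensor P) (Hv : stochastic v) (k_gt0 : (0 < k)%N)
  (alpha_ge0 : 0 <= alpha) (alpha_k_lt1 : alpha * k%:R < 1).

Local Notation tpow x := (flat_apply P (fun _ => x)).
Local Notation f := (mlpr_f P alpha v).
Local Notation aM x := (alpha *: flat_deriv P x).
Local Notation y i := (newton P alpha v i).

Lemma vsum_mlpr_f x : vsum (f x) = alpha * vsum x ^+ k + (1 - alpha) - vsum x.
Proof. by rewrite /mlpr_f vsumB vsumD !vsumZ vsum_tpow // (Hv.2 : vsum v = 1) mulr1. Qed.

Lemma newton_succE i : mlpr_J P alpha (y i) \in unitmx ->
  (y i.+1 - y i) - aM (y i) *m (y i.+1 - y i) = f (y i).
Proof.
move=> U; set J := mlpr_J P alpha (y i).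
have -> : y i.+1 - y i = - (invmx J *m f (y i)) by rewrite /= addrAC subrr add0r.
rewrite -[X in X - _]mul1mx -mulmxBl -opprB mulNmx mulmxN opprK mulmxA.
by rewrite mulmxV // mul1mx.
Qed.

Lemma mlpr_f_newton_succ i : mlpr_J P alpha (y i) \in unitmx ->
  f (y i.+1) = alpha *: (tpow (y i.+1) - tpow (y i) - flat_deriv P (y i) *m (y i.+1 - y i)).
Proof.
move/newton_succE; rewrite -scalemxAl => E; apply/matrixP => a b.
by have := congr1 (fun M : 'cV[R]_n => M a b) E; rewrite !mxE => ?; lra.
Qed.

Lemma vsum_newton_eq x d : d - aM x *m d = f x ->
  vsum d - alpha * (k%:R * vsum x ^+ k.-1 * vsum d)
    = alpha * vsum x ^+ k + (1 - alpha) - vsum x.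
Proof. by move=> E; rewrite -vsum_mlpr_f -E -scalemxAl vsumB vsumZ vsum_flat_deriv. Qed.

Lemma vsum_newton_succ i : mlpr_J P alpha (y i) \in unitmx ->
  (vsum (y i.+1) - vsum (y i)) - alpha * (k%:R * vsum (y i) ^+ k.-1 * (vsum (y i.+1) - vsum (y i)))
    = alpha * vsum (y i) ^+ k + (1 - alpha) - vsum (y i).
Proof. by move/newton_succE/vsum_newton_eq; rewrite [vsum (y i.+1 - y i)]vsumB. Qed.

Lemma linearised_nonneg x (d : 'cV[R]_n) : nonneg x -> vsum x <= 1 ->
  nonneg (d - aM x *m d) -> nonneg d.
Proof.
move=> x0 sx1; apply: (@nonneg_of_subr_mul _ _ (aM x) _ alpha_k_lt1).
- exact (scaled_deriv_ge0 HP alpha_ge0 x0).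
- exact (vsum_scaled_deriv_le HP alpha_ge0 x0 sx1).
Qed.

Lemma newton_invariant i :
  [/\ nonneg (y i), vsum (y i) <= 1 & nonneg (f (y i))].
Proof.
elim: i => [|i [y0 sy1 f0]].
  split; [exact: nonneg0 | by rewrite vsum0 ler01 |].
  have alpha_le1 : alpha <= 1.
    by apply: ltW; apply: le_lt_trans alpha_k_lt1; rewrite ler_peMr // ler1n.
  move=> j; rewrite /mlpr_f subr0 mxE.
  apply: addr_ge0; rewrite mxE mulr_ge0 ?subr_ge0 ?Hv.1 //.
  exact (flat_apply_ge0 HP (fun _ => @nonneg0 _ _) j).
have U := unitmx_mlpr_J HP alpha_ge0 y0 sy1 alpha_k_lt1.
have d0 : nonneg (y i.+1 - y i).
  by apply: linearised_nonneg y0 sy1 _; rewrite newton_succE.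
have y'0 : nonneg (y i.+1).
  by move=> j; have := d0 j; have := y0 j; rewrite !mxE; lra.
have s01 : 0 <= vsum (y i) <= 1 by rewrite vsum_ge0.
have [e'0 _ _] := scalar_newton_step k_gt0 alpha_ge0 alpha_k_lt1 s01 (vsum_newton_succ U).
split=> //; first by lra.
rewrite mlpr_f_newton_succ // => j; rewrite mxE mulr_ge0 //.
by apply: tpow_convex.
Qed.

Lemma newton_unitmx i : mlpr_J P alpha (y i) \in unitmx.
Proof.
have [y0 sy1 _] := newton_invariant i.
exact (unitmx_mlpr_J HP alpha_ge0 y0 sy1 alpha_k_lt1).
Qed.

Definition deficit i := 1 - vsum (y i).

Lemma deficit_ge0 i : 0 <= deficit i.
Proof. by have [_ sy1 _] := newton_invariant i; rewrite subr_ge0. Qed.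

Lemma deficit_step i : [/\ deficit i.+1 <= alpha * k%:R * deficit i &
  (1 - alpha * k%:R) * deficit i.+1 <= k%:R ^+ 2 * deficit i ^+ 2].
Proof.
have [y0 sy1 _] := newton_invariant i.
have s01 : 0 <= vsum (y i) <= 1 by rewrite vsum_ge0.
by have [] := scalar_newton_step k_gt0 alpha_ge0 alpha_k_lt1 s01
  (vsum_newton_succ (newton_unitmx i)).
Qed.

Lemma deficit_small (eps : R) : 0 < eps -> exists N, forall i, (N <= i)%N -> deficit i < eps.
Proof.
have decr i : deficit i.+1 <= alpha * k%:R * deficit i by have [] := deficit_step i.
exact (contraction_seq_small alpha_k_lt1 deficit_ge0 decr (eps := eps)).
Qed.

Lemma newton_le_succ i : nonneg (y i.+1 - y i).
Proof.
have [y0 sy1 f0] := newton_invariant i.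
by apply: (linearised_nonneg y0 sy1); rewrite newton_succE // newton_unitmx.
Qed.

Lemma newton_le i i' j : (i <= i')%N -> y i j 0 <= y i' j 0.
Proof.
move/subnK <-; elim: (i' - i)%N => [|d IH]; first by rewrite add0n.
by apply: le_trans IH _; have := newton_le_succ (d + i) j; rewrite !mxE subr_ge0.
Qed.

Lemma newton_le_fixpoint x : nonneg x -> x = alpha *: tpow x + (1 - alpha) *: v ->
  forall i, nonneg (x - y i).
Proof.
move=> x0 x_fix; elim=> [|i IH]; first by rewrite subr0.
have [y0 sy1 f0] := newton_invariant i.
have E := newton_succE (newton_unitmx i).
have E' : (x - y i.+1) - aM (y i) *m (x - y i.+1) =
    alpha *: (tpow x - tpow (y i) - flat_deriv P (y i) *m (x - y i)).
  move: E; rewrite -!scalemxAl /mlpr_f => E; apply/matrixP => a b.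
  have := congr1 (fun M : 'cV[R]_n => M a b) E.
  have := congr1 (fun M : 'cV[R]_n => M a b) x_fix.
  rewrite !mulmxBr !mxE => ? ?; lra.
apply: (linearised_nonneg y0 sy1); rewrite E' => j; rewrite mxE mulr_ge0 //.
exact (tpow_convex HP y0 IH j).
Qed.

Definition newton_lim : 'cV[R]_n := \col_j sup (range (fun i => y i j 0)).

Lemma newton_cauchy i i' j : y i' j 0 <= y i j 0 + deficit i.
Proof.
have e0 := deficit_ge0 i.
case: (leqP i' i) => [i'_le_i | /ltnW i_le_i']; first by have := newton_le j i'_le_i; lra.
have d0 : nonneg (y i' - y i) by move=> l; rewrite !mxE subr_ge0 newton_le.
have := entry_le_vsum j d0; rewrite !mxE vsumB /deficit.
by have [_ sy1 _] := newton_invariant i'; lra.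
Qed.

Lemma newton_bounded j : has_ubound (range (fun i => y i j 0)).
Proof. by exists (y 0%N j 0 + deficit 0) => _ [i _ <-]; exact: newton_cauchy. Qed.

Lemma newton_le_lim i j : y i j 0 <= newton_lim j 0.
Proof. by rewrite mxE; apply: ub_le_sup (newton_bounded j) _ _; exists i. Qed.

Lemma newton_lim_le i j : newton_lim j 0 <= y i j 0 + deficit i.
Proof.
rewrite mxE; apply: ge_sup; first by exists (y 0%N j 0), 0%N.
by move=> _ [i' _ <-]; exact: newton_cauchy.
Qed.

Lemma vsum_newton_lim : vsum newton_lim = 1.
Proof.
apply/le_anti/andP; split; apply/ler_addgt0Pr => eps eps0.
- have n1_gt0 : 0 < n%:R + 1 :> R by rewrite ltr_wpDl.
  have [N HN] := deficit_small (divr_gt0 eps0 n1_gt0).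
  have := HN N (leqnn N); rewrite ltr_pdivlMr // => e_small.
  have : vsum newton_lim <= vsum (y N) + n%:R * deficit N.
    rewrite (_ : n%:R * _ = \sum_(j < n) deficit N); last first.
      by rewrite sumr_const card_ord mulr_natl.
    rewrite /vsum -big_split.
    by apply: ler_sum => j _; exact: newton_lim_le.
  have := deficit_ge0 N; rewrite (_ : vsum (y N) = 1 - deficit N); first lra.
  by rewrite /deficit opprB addrC subrK.
- have [N HN] := deficit_small eps0; have := HN N (leqnn N).
  have : vsum (y N) <= vsum newton_lim by apply: ler_sum => j _; exact: newton_le_lim.
  rewrite /deficit; lra.
Qed.

Lemma newton_lim_ge0 : nonneg newton_lim.
Proof. by move=> j; apply: le_trans (newton_le_lim 0 j); rewrite mxE. Qed.

Lemma newton_lim_stochastic : stochastic newton_lim.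
Proof. by split; [exact: newton_lim_ge0 | exact: vsum_newton_lim]. Qed.

(* Every f (y i) is nonnegative, so newton_lim lies below the right-hand
   side, and both have coordinate sum 1. *)
Lemma newton_lim_fixpoint : newton_lim = alpha *: tpow newton_lim + (1 - alpha) *: v.
Proof.
set g := alpha *: tpow newton_lim + (1 - alpha) *: v.
apply: nonneg_subr_vsum_eq; last first.
  rewrite /g vsumD !vsumZ (vsum_tpow HP) [vsum newton_lim]vsum_newton_lim.
  by rewrite expr1n (Hv.2 : vsum v = 1); ring.
move=> j; rewrite !mxE subr_ge0; apply: ge_sup; first by exists (y 0%N j 0), 0%N.
move=> _ [i _ <-]; have [y0 _ f0] := newton_invariant i.
have y_le l : 0 <= y i l 0 <= newton_lim l 0 by rewrite y0 newton_le_lim.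
move: (f0 j) (flat_apply_le HP (fun _ => y_le) j); rewrite !mxE => fy0 tpow_le.
by rewrite -subr_ge0; apply: le_trans fy0 _; rewrite !lerD2r ler_wpM2l.
Qed.

Lemma newton_lim_unique x : stochastic x ->
  x = alpha *: tpow x + (1 - alpha) *: v -> x = newton_lim.
Proof.
move=> [x0 sx1] x_fix; symmetry; apply: nonneg_subr_vsum_eq; last first.
  by rewrite [vsum newton_lim]vsum_newton_lim (sx1 : vsum x = 1).
move=> j; rewrite !mxE subr_ge0; apply: ge_sup; first by exists (y 0%N j 0), 0%N.
move=> _ [i _ <-]; have := newton_le_fixpoint x0 x_fix i j.
by rewrite !mxE subr_ge0.
Qed.

Lemma vnorm1_newton_sub_lim i : vnorm1 (y i - newton_lim) = deficit i.
Proof.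
rewrite /vnorm1 (eq_bigr (fun j => (newton_lim - y i) j 0)); last first.
  move=> j _; have := newton_le_lim i j; rewrite !mxE -subr_ge0 => lim_ge.
  by rewrite distrC ger0_norm.
by rewrite -/(vsum _) vsumB [vsum newton_lim]vsum_newton_lim.
Qed.

Lemma deficit_quadratic i :
  deficit i.+1 <= k%:R ^+ 2 / (1 - alpha * k%:R) * deficit i ^+ 2.
Proof.
have [_ quad] := deficit_step i.
by rewrite mulrAC ler_pdivlMr ?subr_gt0 // mulrC.
Qed.

End NewtonIteration.

Theorem theorem3p3 (R : realType) (m n : nat) (hm : (2 <= m)%N) (hn : (1 <= n)%N)
  (P : tensor R n m.-1) (v : 'cV[R]_n) (alpha : R) :
  transition_tensor P -> stochastic v ->
  0 <= alpha -> alpha < 1 -> alpha < 1 / (m.-1)%:R ->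
  exists x : 'cV[R]_n,
    [/\ (* x is the unique (stochastic) multilinear PageRank solution *)
        stochastic x,
        x = alpha *: flat_apply P (fun _ => x) + (1 - alpha) *: v,
        (forall y : 'cV[R]_n, stochastic y ->
           y = alpha *: flat_apply P (fun _ => y) + (1 - alpha) *: v -> y = x) &
      [/\
        (* the Newton iteration is well defined *)
        (forall i, mlpr_J P alpha (newton P alpha v i) \in unitmx),
        (* it converges to x *)
        (forall eps : R, 0 < eps -> exists N : nat, forall i, (N <= i)%N ->
           vnorm1 (newton P alpha v i - x) < eps) &
        (* quadratically *)
        (exists C : R, 0 < C /\ exists N : nat, forall i, (N <= i)%N ->
           vnorm1 (newton P alpha v i.+1 - x)
             <= C * vnorm1 (newton P alpha v i - x) ^+ 2)]].
Proof.
(* [hn] and [alpha < 1] follow from the other hypotheses. *)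
move=> HP Hv alpha_ge0 _ alpha_lt.
have k_gt0 : (0 < m.-1)%N by rewrite -subn1 subn_gt0.
have alpha_k_lt1 : alpha * (m.-1)%:R < 1 by rewrite -ltr_pdivlMr ?ltr0n.
exists (newton_lim P v alpha); split.
- exact: newton_lim_stochastic.
- exact: newton_lim_fixpoint.
- exact: newton_lim_unique.
split.
- exact: newton_unitmx.
- move=> eps /(deficit_small HP Hv k_gt0 alpha_ge0 alpha_k_lt1) [N HN].
  by exists N => i Ni; rewrite vnorm1_newton_sub_lim // HN.
- exists ((m.-1)%:R ^+ 2 / (1 - alpha * (m.-1)%:R)); split.
    by rewrite divr_gt0 ?exprn_gt0 ?ltr0n // subr_gt0.
  exists 0%N => i _; rewrite !vnorm1_newton_sub_lim //.
  exact: deficit_quadratic.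
Qed.
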